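(* For every integer $n\ge 4$, $d(C_n)<h(n)$, where $$h(n)=\begin{cases}2^{n-1}+(n+9)\cdot 2^{\frac{n-7}{2}}, & n\text{ odd},\\ 2^{n-1}+(n+12)\cdot 2^{\frac{n-8}{2}}, & n \text{ even},\ n\neq 6,\\ 42, & n=6.\end{cases}$$
   Context: All graphs are finite, simple and undirected. A subset $D\subseteq V(G)$ is a dissociation set of $G$ if the induced subgraph $G[D]$ has maximum degree at most $1$; the empty set is a dissociation set. $d(G)$ denotes the total number of dissociation sets of $G$, including the empty set. $C_n$ denotes the cycle on $n$ vertices. *)

From mathcomp Require Import all_boot all_order all_algebra.
Set Implicit Arguments. Unset Strict Implicit. Unset Printing Implicit Defensive.
Import Order.TTheory GRing.Theory Num.Theory.
Local Open Scope ring_scope.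

Definition simple_graph (T : finType) (e : rel T) : Prop :=
  irreflexive e /\ symmetric e.

Definition dissociation (T : finType) (e : rel T) (D : {set T}) : bool :=
  [forall x in D, (#|[set y in D | e x y]| <= 1)%N].

Definition dnum (T : finType) (e : rel T) : nat :=
  #|[set D : {set T} | dissociation e D]|.

Definition cycle_adj (n : nat) : rel 'I_n :=
  fun i j => (j == (i.+1 %% n)%N :> nat) || (i == (j.+1 %% n)%N :> nat).

(* h(n) as a rational; exponents (n-7)/2, (n-8)/2 are integers (possibly
   negative for small n). *)
Definition hval (n : nat) : rat :=
  if odd n then
    2%:Q ^+ n.-1 + (n + 9)%:R * 2%:Q ^ ((n%:Z - 7) %/ 2)%Z
  else if (n == 6)%N then 42%:R
  else 2%:Q ^+ n.-1 + (n + 12)%:R * 2%:Q ^ ((n%:Z - 8) %/ 2)%Z.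

From mathcomp Require Import all_boot all_order all_algebra.
From mathcomp Require Import zify.
Import Order.TTheory GRing.Theory Num.Theory.

(* A dissociation set of C_n never contains three cyclically consecutive
   vertices, since the middle one would have two neighbours in it.  Hence its
   indicator word is a cyclic binary word avoiding 111, and d(C_n) is at most
   the number of such words.  These are in particular linear words avoiding
   111, whose number obeys the tribonacci recurrence and is therefore below
   2^(n-1) <= h(n) as soon as n >= 10; for 4 <= n <= 9 the number of cyclic
   words is compared with h(n) by computation. *)

Fixpoint bitseqs (n : nat) : seq bitseq :=
  if n is m.+1 then map (cons false) (bitseqs m) ++ map (cons true) (bitseqs m)
  else [:: [::]].

Lemma mem_bitseqs n s : size s = n -> s \in bitseqs n.
Proof.
elim: s n => [|b s IHs] [|n] //= [/IHs s_n]; rewrite mem_cat.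
by case: b; apply/orP; [right | left]; apply: map_f.
Qed.

Lemma count_bitseqsS (p : pred bitseq) n :
  count p (bitseqs n.+1) =
  count (p \o cons false) (bitseqs n) + count (p \o cons true) (bitseqs n).
Proof. by rewrite /= count_cat !count_map. Qed.

Fixpoint avoids111 (s : bitseq) : bool :=
  match s with
  | [:: true, true, true & _] => false
  | _ :: t => avoids111 t
  | [::] => true
  end.

Definition cyc_avoids111 (s : bitseq) : bool := avoids111 (s ++ take 2 s).

Lemma avoids111_prefix s t : avoids111 (s ++ t) -> avoids111 s.
Proof. by elim: s => [|[] [|[] [|[] s]] IHs] //= /IHs. Qed.

Lemma avoids111_nth s :
  (forall i, i.+2 < size s ->
     ~~ [&& nth false s i, nth false s i.+1 & nth false s i.+2]) ->
  avoids111 s.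
Proof.
elim: s => [//|a s IHs] triple_free.
have avoid_s := IHs (fun i => triple_free i.+1).
move: (triple_free 0) avoid_s; case: a {IHs triple_free} => //.
by case: s => [|[] [|[] s]] //= /(_ isT).
Qed.

Definition num_avoid111 (n : nat) : nat := count avoids111 (bitseqs n).

(* Split a word avoiding 111 after its first 0: the prefix is 0, 10 or 110. *)
Lemma num_avoid111S n :
  num_avoid111 n.+3 = num_avoid111 n.+2 + num_avoid111 n.+1 + num_avoid111 n.
Proof.
rewrite /num_avoid111 !count_bitseqsS.
rewrite (@eq_count _ (_ \o cons true \o cons true \o cons true) pred0) //.
by rewrite count_pred0 addn0 !addnA.
Qed.

Lemma num_avoid111_lt {n} : 10 <= n -> num_avoid111 n < 2 ^ n.-1.
Proof.
elim/ltn_ind: n => -[|[|[|m]]] IH // m_ge.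
have [m_le9 | m_gt9] := leqP m 9.
  have base : all (fun k => num_avoid111 k < 2 ^ k.-1) (iota 10 3) by vm_compute.
  by apply: (allP base); rewrite mem_iota; lia.
rewrite num_avoid111S.
have ih k : k < 3 -> num_avoid111 (m + k) < 2 ^ (m + k).-1.
  by move=> k_lt3; apply: IH; lia.
move: (ih 0 isT) (ih 1 isT) (ih 2 isT); rewrite addn0 addn1 addn2.
by case: m m_gt9 {IH ih m_ge} => [//|m] _ /=; rewrite !expnS; lia.
Qed.

Lemma count_cyc_avoids111_le n :
  count cyc_avoids111 (bitseqs n) <= num_avoid111 n.
Proof. by apply: sub_count => s /avoids111_prefix. Qed.

Lemma nth_cat_take2 (T : Type) (x0 : T) s j :
  2 <= size s -> j < size s + 2 ->
  nth x0 (s ++ take 2 s) j = nth x0 s (j %% size s).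
Proof.
move=> s_ge2 j_lt; rewrite nth_cat.
have [j_lt_s | j_ge_s] := ltnP j (size s); first by rewrite modn_small.
rewrite nth_take; last by lia.
by rewrite -{2}(subnK j_ge_s) modnDr modn_small //; lia.
Qed.

Lemma nth_map_enum_ord (T : Type) (x0 : T) n (f : 'I_n -> T) (i : 'I_n) :
  nth x0 [seq f i | i <- enum 'I_n] i = f i.
Proof. by rewrite (nth_map i) ?size_enum_ord // nth_ord_enum. Qed.

Lemma cyc_avoids111_ord n (f : 'I_n -> bool) : 2 <= n ->
  (forall i, ~~ [&& f i, f (ordS i) & f (ordS (ordS i))]) ->
  cyc_avoids111 [seq f i | i <- enum 'I_n].
Proof.
move=> n_ge2 triple_free; apply: avoids111_nth => j.
have size_s : size [seq f i | i <- enum 'I_n] = n by rewrite size_map size_enum_ord.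
have n_gt0 : 0 < n by lia.
rewrite size_cat size_takel size_s // => j_lt.
rewrite !nth_cat_take2 size_s //; try lia.
pose i := Ordinal (ltn_pmod j n_gt0).
have succ1 : j.+1 %% n = ordS i by rewrite /= -[(j %% n).+1]addn1 modnDml addn1.
have succ2 : j.+2 %% n = ordS (ordS i).
  by rewrite -[nat_of_ord (ordS (ordS i))]/((ordS i).+1 %% n) -succ1
    -[(j.+1 %% n).+1]addn1 modnDml addn1.
rewrite succ2 succ1 -[j %% n]/(val i) !nth_map_enum_ord.
exact: triple_free.
Qed.

Lemma ordS2_neq n (i : 'I_n) : 3 <= n -> ordS (ordS i) != i.
Proof.
move=> n_ge3; apply/eqP => /(congr1 val) /=.
rewrite -[(i.+1 %% n).+1]addn1 modnDml addn1.
have [i_lt | i_ge] := ltnP i.+2 n; first by rewrite modn_small //; lia.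
by rewrite -(subnK i_ge) modnDr modn_small; have := ltn_ord i; lia.
Qed.

Lemma dissociation_cycle_triple n (D : {set 'I_n}) : 3 <= n ->
  dissociation (@cycle_adj n) D ->
  forall i, ~~ [&& i \in D, ordS i \in D & ordS (ordS i) \in D].
Proof.
move=> n_ge3 /forallP dissD i; apply/and3P => -[Di DSi DSSi].
move: (dissD (ordS i)) => /implyP /(_ DSi); apply/negP; rewrite -ltnNge.
have sub : [set i; ordS (ordS i)] \subset [set y in D | cycle_adj (ordS i) y].
  by apply/subsetP => y; rewrite !inE => /orP[] /eqP->;
    rewrite ?Di ?DSSi /cycle_adj /= eqxx ?orbT.
by rewrite (leq_trans _ (subset_leq_card sub)) // cards2 eq_sym ordS2_neq.
Qed.

Definition indicator n (D : {set 'I_n}) : bitseq := [seq i \in D | i <- enum 'I_n].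

Lemma indicator_inj n : injective (@indicator n).
Proof.
move=> D1 D2 eq_ind; apply/setP => i.
by move: (congr1 (nth false ^~ i) eq_ind); rewrite !nth_map_enum_ord.
Qed.

Lemma dnum_cycle_le {n} : 3 <= n ->
  dnum (@cycle_adj n) <= count cyc_avoids111 (bitseqs n).
Proof.
move=> n_ge3; rewrite /dnum cardE -(size_map (@indicator n)) -size_filter.
apply: uniq_leq_size; first by rewrite (map_inj_uniq (@indicator_inj n)) enum_uniq.
move=> s /mapP [D]; rewrite mem_enum inE => dissD ->.
rewrite mem_filter mem_bitseqs ?andbT; last by rewrite size_map size_enum_ord.
by apply: cyc_avoids111_ord; [lia | exact: dissociation_cycle_triple].
Qed.

Lemma pow2_le_hval {n} : n != 6 -> (2%:Q ^+ n.-1 <= hval n)%R.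
Proof.
move=> n_neq6; rewrite /hval (negbTE n_neq6).
by case: ifP => _; rewrite lerDl mulr_ge0 // exprz_ge0.
Qed.

Theorem lemma4p1 (n : nat) : (4 <= n)%N -> ((dnum (@cycle_adj n))%:R < hval n)%R.
Proof.
move=> n_ge4; have dnum_le := dnum_cycle_le (ltnW n_ge4).
have [n_le9 | n_gt9] := leqP n 9.
  have small_cases : all (fun k => (count cyc_avoids111 (bitseqs k))%:R < hval k)%R
                         (iota 4 6) by vm_compute.
  apply: le_lt_trans (allP small_cases n _); first by rewrite ler_nat.
  by rewrite mem_iota; lia.
apply: lt_le_trans (pow2_le_hval _); last by lia.
rewrite -natrX ltr_nat (leq_ltn_trans dnum_le) //.
exact: leq_ltn_trans (count_cyc_avoids111_le n) (num_avoid111_lt n_gt9).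
Qed.
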